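(* Let $\mathbf v\in\mathbb Z^4$ satisfy $Q_{\mathcal D}(\mathbf v)=-4$, and let $\mathcal C$ be the set of all integers occurring as a coordinate of some element of the orbit $\mathcal A[\mathbf v]$ (the curvatures of the corresponding integral spherical Apollonian packing). Then the set of residues modulo $12$ of elements of $\mathcal C$ omits exactly three congruence classes modulo $12$.
   Context: $Q_{\mathcal D}(a,b,c,d)=2(a^2+b^2+c^2+d^2)-(a+b+c+d)^2$. $\mathbf S_i$ ($i=1,\dots,4$) is the $4\times4$ integer matrix replacing the $i$-th coordinate $a_i$ of a column vector by $2\sum_{j\ne i}a_j-a_i$, other coordinates fixed; the Apollonian group $\mathcal A$ is the subgroup of $GL(4,\mathbb Z)$ they generate, and $\mathcal A[\mathbf v]=\{\mathbf U\mathbf v:\mathbf U\in\mathcal A\}$. *)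

From mathcomp Require Import all_boot all_order all_algebra.
Set Implicit Arguments. Unset Strict Implicit. Unset Printing Implicit Defensive.
Import Order.TTheory GRing.Theory Num.Theory.
Local Open Scope ring_scope.

Definition QD (v : 'cV[int]_4) : int :=
  2 * (\sum_(i < 4) v i 0 ^+ 2) - (\sum_(i < 4) v i 0) ^+ 2.

Definition Sgen (i : 'I_4) : 'M[int]_4 :=
  \matrix_(j < 4, k < 4)
    (if j == i then (if k == i then -1 else 2) else (j == k)%:R).

Inductive apollonian : 'M[int]_4 -> Prop :=
  | apo_id : apollonian 1%:M
  | apo_gen i : apollonian (Sgen i)
  | apo_mul U V : apollonian U -> apollonian V -> apollonian (U *m V)
  | apo_inv U : apollonian U -> apollonian (invmx U).

Definition orbit_A (v : 'cV[int]_4) (w : 'cV[int]_4) : Prop :=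
  exists U, apollonian U /\ w = U *m v.

Definition curvatures (v : 'cV[int]_4) (c : int) : Prop :=
  exists w i, orbit_A v w /\ c = w i 0.

(* If Q_D(v) = -4 then the coordinate sum s of v is even, so each generator
   changes the coordinate it replaces by 2s - 4a_i, a multiple of 4, and keeps
   the sum even: every element of the orbit is congruent to v modulo 4.
   Reducing Q_D(v) = -4 modulo 16 shows that the coordinates of v meet exactly
   three classes modulo 4, so no curvature lies in the three classes modulo 12
   above the fourth one.  Conversely, modulo 3 the words 1, S_j and S_j S_k put
   v_j, -s and v_k in position j, and Q_D(v) = -4 modulo 3 forces these values
   to meet every residue; combined with the congruence modulo 4, every other
   class modulo 12 is a curvature.  Both facts about residues are finite checks
   by evaluation. *)

From mathcomp Require Import all_boot all_order all_algebra.
From mathcomp Require Import ring lra.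
Set Implicit Arguments.
Unset Strict Implicit.
Unset Printing Implicit Defensive.

Import Order.TTheory GRing.Theory Num.Theory.
Local Open Scope ring_scope.

Lemma dvdz_sub_sym (m x y : int) : (m %| x - y)%Z = (m %| y - x)%Z.
Proof. by rewrite -opprB rpredN. Qed.

Lemma dvdz_sub_trans (m x y z : int) :
  (m %| x - y)%Z -> (m %| y - z)%Z -> (m %| x - z)%Z.
Proof. by move=> mxy myz; rewrite -(subrKA y) rpredD. Qed.

Lemma dvdz_sub_congr (m x x' r r' : int) :
  (m %| x - x')%Z -> (m %| r - r')%Z -> (m %| x - r)%Z = (m %| x' - r')%Z.
Proof.
move=> mx mr; apply/idP/idP => h.
  by rewrite dvdz_sub_sym in mx; apply: dvdz_sub_trans mx (dvdz_sub_trans h mr).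
by rewrite dvdz_sub_sym in mr; apply: dvdz_sub_trans mx (dvdz_sub_trans h mr).
Qed.

Lemma dvdz_sub_add (m x x' y y' : int) :
  (m %| x - x')%Z -> (m %| y - y')%Z -> (m %| (x + y) - (x' + y'))%Z.
Proof. by move=> mx my; rewrite opprD addrACA rpredD. Qed.

Lemma dvdz_sub_modz (m x : int) : (m %| x - (x %% m)%Z)%Z.
Proof. by rewrite {1}(divz_eq x m) addrK dvdz_mull. Qed.

Lemma modz_eq_dvdz (m c r : int) : 0 <= r < m -> ((c %% m)%Z == r) = (m %| c - r)%Z.
Proof. by move=> r_range; rewrite -eqz_mod_dvd (modz_small r_range). Qed.

Lemma has_dvdz_congr (m r r' : int) (s t : seq int) :
  (m %| r - r')%Z -> all2 (fun x y => (m %| x - y)%Z) s t ->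
  has (fun x => (m %| x - r)%Z) s = has (fun y => (m %| y - r')%Z) t.
Proof.
move=> mr; elim: s t => [|x s IH] [|y t] //= /andP[mxy /IH ->].
by rewrite (dvdz_sub_congr mxy mr).
Qed.

Lemma modz_iota (m : nat) (x : int) : (0 < m)%N ->
  exists2 k, k \in iota 0 m & (x %% m)%Z = k%:Z.
Proof.
move=> m_gt0; exists `|(x %% m)%Z|%N; last by rewrite gez0_abs // modz_ge0 // -lt0n.
by rewrite mem_iota /= -ltz_nat gez0_abs ?ltz_pmod ?modz_ge0 // -lt0n.
Qed.

Lemma ord4P (j : 'I_4) : [\/ j = 0, j = 1, j = 2 | j = 3].
Proof.
by case: j => [[|[|[|[|//]]]] lt_j4]; [apply: Or41|apply: Or42|apply: Or43|apply: Or44];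
  apply/val_inj.
Qed.

Lemma sum_ord4 (F : 'I_4 -> int) : \sum_(i < 4) F i = F 0 + F 1 + F 2 + F 3.
Proof.
rewrite !big_ord_recl big_ord0 addr0 !addrA.
by congr (F _ + F _ + F _ + F _); apply/val_inj.
Qed.

Lemma card_set_ord n (P : pred nat) : #|[set r : 'I_n | P r]| = count P (iota 0 n).
Proof. by rewrite cardsE cardE /enum_mem size_filter -enumT -val_enum_ord count_map. Qed.

Definition csum (w : 'cV[int]_4) : int := \sum_(i < 4) w i 0.

Lemma Sgen_mul_self i (w : 'cV[int]_4) : (Sgen i *m w) i 0 = 2 * csum w - 3 * w i 0.
Proof.
rewrite mxE (bigD1 i) //= mxE !eqxx.
have off_i : \sum_(j < 4 | j != i) (Sgen i) i j * w j 0 = 2 * \sum_(j < 4 | j != i) w j 0.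
  by rewrite big_distrr; apply: eq_bigr => j /negbTE ji; rewrite mxE eqxx ji.
by rewrite off_i /csum [in RHS](bigD1 i) //=; ring.
Qed.

Lemma Sgen_mul_other i j (w : 'cV[int]_4) : j != i -> (Sgen i *m w) j 0 = w j 0.
Proof.
move=> /negbTE ji; rewrite mxE (bigD1 j) //= mxE ji eqxx mul1r big1 ?addr0 // => k kj.
by rewrite mxE ji eq_sym (negbTE kj) mul0r.
Qed.

Lemma csum_Sgen i (w : 'cV[int]_4) : csum (Sgen i *m w) = 3 * csum w - 4 * w i 0.
Proof.
rewrite {1}/csum (bigD1 i) //= Sgen_mul_self.
under eq_bigr => j ji do rewrite Sgen_mul_other //.
rewrite /csum (bigD1 i) //=; ring.
Qed.

Lemma SgenK i (w : 'cV[int]_4) : Sgen i *m (Sgen i *m w) = w.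
Proof.
apply/matrixP => j k; rewrite ord1.
have [->|ji] := eqVneq j i; last by rewrite !Sgen_mul_other.
rewrite Sgen_mul_self csum_Sgen Sgen_mul_self; ring.
Qed.

Lemma Sgen_sqr i : Sgen i *m Sgen i = 1%:M.
Proof.
apply/matrixP => j k; have /(congr1 (fun u : 'cV_4 => u j 0)) := SgenK i (delta_mx k 0).
by rewrite mulmxA -colE !mxE eqxx andbT.
Qed.

Definition Sword (s : seq 'I_4) : 'M[int]_4 := \prod_(i <- s) Sgen i.

Lemma Sword_nil : Sword [::] = 1%:M.
Proof. exact: big_nil. Qed.

Lemma Sword_cons i s : Sword (i :: s) = Sgen i *m Sword s.
Proof. by rewrite /Sword big_cons. Qed.

Lemma Sword_seq1 i : Sword [:: i] = Sgen i.
Proof. exact: big_seq1. Qed.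

Lemma Sword_cat s t : Sword (s ++ t) = Sword s *m Sword t.
Proof. by rewrite /Sword big_cat. Qed.

Lemma Sword_mul_rev s : Sword s *m Sword (rev s) = 1%:M.
Proof.
elim: s => [|i s IH]; first by rewrite Sword_nil mul1mx.
rewrite rev_cons -cats1 Sword_cat Sword_cons Sword_seq1.
by rewrite -!mulmxA (mulmxA (Sword s)) IH mul1mx Sgen_sqr.
Qed.

Lemma invmx_Sword s : invmx (Sword s) = Sword (rev s).
Proof.
have SS := Sword_mul_rev s; have [Su _] := mulmx1_unit SS.
by rewrite -[invmx _]mulmx1 -SS mulmxA mulVmx ?mul1mx.
Qed.

Lemma apollonian_Sword U : apollonian U -> exists s, U = Sword s.
Proof.
elim=> [|i|_ _ _ [s ->] _ [t ->]|_ _ [s ->]].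
- by exists [::]; rewrite Sword_nil.
- by exists [:: i]; rewrite Sword_seq1.
- by exists (s ++ t); rewrite Sword_cat.
- by exists (rev s); rewrite invmx_Sword.
Qed.

Lemma QD_sum_even v : QD v = -4 -> (2 %| csum v)%Z.
Proof.
rewrite /QD -/(csum v) => Qv.
have sq : csum v ^+ 2 = 2 * (\sum_(i < 4) v i 0 ^+ 2 + 2) by lra.
have : (2 %| `|csum v| ^ 2)%N by rewrite -abszX sq abszM dvdn_mulr.
by rewrite Euclid_dvdX // => /andP[].
Qed.

Lemma csum_Sgen_even i (w : 'cV[int]_4) :
  (2 %| csum (Sgen i *m w))%Z = (2 %| csum w)%Z.
Proof.
rewrite csum_Sgen (_ : _ - _ = csum w + 2 * (csum w - 2 * w i 0)); last by ring.
by rewrite rpredDr // dvdz_mulr.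
Qed.

Lemma Sgen_mul_congr4 i j (w : 'cV[int]_4) :
  (2 %| csum w)%Z -> (4 %| ((Sgen i *m w) j 0 - w j 0)%R)%Z.
Proof.
move=> even_w; have [->|ji] := eqVneq j i; last by rewrite Sgen_mul_other ?subrr.
rewrite Sgen_mul_self (_ : _ - _ = 2 * csum w - 4 * w i 0); last by ring.
by apply: rpredB; [exact: (dvdz_mul (dvdzz 2) even_w) | exact: dvdz_mulr].
Qed.

Lemma csum_Sword_even s (w : 'cV[int]_4) :
  (2 %| csum (Sword s *m w))%Z = (2 %| csum w)%Z.
Proof.
elim: s => [|i s IH]; first by rewrite Sword_nil mul1mx.
by rewrite Sword_cons -mulmxA csum_Sgen_even.
Qed.

Lemma Sword_mul_congr4 s j (w : 'cV[int]_4) :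
  (2 %| csum w)%Z -> (4 %| ((Sword s *m w) j 0 - w j 0)%R)%Z.
Proof.
move=> even_w; elim: s => [|i s IH]; first by rewrite Sword_nil mul1mx subrr.
rewrite Sword_cons -mulmxA; apply: dvdz_sub_trans IH.
by apply: Sgen_mul_congr4; rewrite csum_Sword_even.
Qed.

Lemma orbit_A_congr4 v w :
  (2 %| csum v)%Z -> orbit_A v w -> forall j, (4 %| (w j 0 - v j 0)%R)%Z.
Proof.
move=> even_v [U [/apollonian_Sword [s ->] ->]] j; exact: Sword_mul_congr4.
Qed.

Definition coords (v : 'cV[int]_4) : seq int := [:: v 0 0; v 1 0; v 2 0; v 3 0].

Lemma has_coordsP (p : pred int) (v : 'cV[int]_4) :
  reflect (exists j, p (v j 0)) (has p (coords v)).
Proof.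
apply: (iffP hasP) => [[x] | [j pj]].
  by rewrite !inE => /or4P[] /eqP-> px; [exists 0 | exists 1 | exists 2 | exists 3].
by exists (v j 0); rewrite // !inE; case: (ord4P j) => ->; rewrite eqxx ?orbT.
Qed.

Lemma csumE (v : 'cV[int]_4) : csum v = v 0 0 + v 1 0 + v 2 0 + v 3 0.
Proof. exact: sum_ord4. Qed.

Definition QD4 (a b c d : int) : int :=
  2 * (a ^+ 2 + b ^+ 2 + c ^+ 2 + d ^+ 2) - (a + b + c + d) ^+ 2.

Definition BD4 (a b c d x y z w : int) : int :=
  2 * (a * x + b * y + c * z + d * w) - (a + b + c + d) * (x + y + z + w).

Lemma QDE v : QD v = QD4 (v 0 0) (v 1 0) (v 2 0) (v 3 0).
Proof. by rewrite /QD !sum_ord4. Qed.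

Lemma QD4_shift (m a b c d x y z w : int) :
  QD4 (x * m + a) (y * m + b) (z * m + c) (w * m + d) - QD4 a b c d =
  m * (2 * BD4 a b c d x y z w + m * QD4 x y z w).
Proof. rewrite /QD4 /BD4; ring. Qed.

Lemma QD4_modz (m a b c d : int) :
  (m %| QD4 a b c d - QD4 (a %% m)%Z (b %% m)%Z (c %% m)%Z (d %% m)%Z)%Z.
Proof.
rewrite {1}(divz_eq a m) {1}(divz_eq b m) {1}(divz_eq c m) {1}(divz_eq d m).
by rewrite QD4_shift dvdz_mulr.
Qed.

Lemma QD4_modz_even (m a b c d : int) : (2 %| m)%Z ->
  (2 * m %| QD4 a b c d - QD4 (a %% m)%Z (b %% m)%Z (c %% m)%Z (d %% m)%Z)%Z.
Proof.
move=> even_m.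
rewrite {1}(divz_eq a m) {1}(divz_eq b m) {1}(divz_eq c m) {1}(divz_eq d m).
by rewrite QD4_shift mulrC dvdz_mul // rpredD ?dvdz_mulr ?dvdz_mull.
Qed.

Definition all_residues (m : nat) (P : int -> int -> int -> int -> bool) : bool :=
  all (fun a => all (fun b => all (fun c => all (fun d => P a%:Z b%:Z c%:Z d%:Z)
    (iota 0 m)) (iota 0 m)) (iota 0 m)) (iota 0 m).

Lemma all_residuesP (m : nat) P : all_residues m P -> (0 < m)%N ->
  forall a b c d : int, P (a %% m)%Z (b %% m)%Z (c %% m)%Z (d %% m)%Z.
Proof.
move=> check m_gt0 a b c d.
have [[ka ina ->] [kb inb ->]] := (modz_iota a m_gt0, modz_iota b m_gt0).
have [[kc inc ->] [kd ind ->]] := (modz_iota c m_gt0, modz_iota d m_gt0).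
by move: check => /allP/(_ _ ina)/allP/(_ _ inb)/allP/(_ _ inc)/allP/(_ _ ind).
Qed.

Definition hit_mod4 (s : seq int) (r : nat) : bool := has (fun x => (4 %| x - r%:Z)%Z) s.

Definition missing_mod4 (s : seq int) : nat := count (predC (hit_mod4 s)) (iota 0 12).

Lemma missing_mod4_residues : all_residues 8 (fun a b c d =>
  (16 %| QD4 a b c d + 4)%Z ==> (missing_mod4 [:: a; b; c; d] == 3)%N).
Proof. by vm_compute. Qed.

Lemma QD4_missing_mod4 (a b c d : int) :
  QD4 a b c d = -4 -> missing_mod4 [:: a; b; c; d] = 3%N.
Proof.
move=> QD4v; have := QD4_modz_even (m := 8) a b c d isT.
rewrite QD4v dvdz_sub_sym opprK => Q16.
move: (all_residuesP missing_mod4_residues isT a b c d).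
move=> /implyP/(_ Q16)/eqP <-; apply: eq_count => r; congr negb.
apply: has_dvdz_congr; first by rewrite subrr.
by rewrite /= !(dvdz_trans _ (dvdz_sub_modz 8 _)).
Qed.

Lemma cover_mod3_residues : all_residues 3 (fun a b c d =>
  (3 %| QD4 a b c d + 4)%Z ==>
  all (fun r : nat => has (fun x => (3 %| x - r%:Z)%Z) [:: a; b; c; d; - (a + b + c + d)])
    (iota 0 3)).
Proof. by vm_compute. Qed.

Lemma QD4_cover_mod3 (a b c d rho : int) : QD4 a b c d = -4 ->
  has (fun x => (3 %| x - rho)%Z) [:: a; b; c; d; - (a + b + c + d)].
Proof.
move=> QD4v; have := QD4_modz 3 a b c d.
rewrite QD4v dvdz_sub_sym opprK => Q3.
have [k k_lt3 rhoE] := modz_iota rho (isT : (0 < 3)%N).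
move: (all_residuesP cover_mod3_residues isT a b c d).
move=> /implyP/(_ Q3)/allP/(_ k k_lt3); rewrite -rhoE.
rewrite -(has_dvdz_congr (m := 3) (r := rho) (s := [:: a; b; c; d; - (a + b + c + d)]))
  ?dvdz_sub_modz //=.
rewrite !dvdz_sub_modz opprK addrC dvdz_sub_sym andbT /=.
apply: dvdz_sub_add _ (dvdz_sub_modz 3%:Z d); apply: dvdz_sub_add _ (dvdz_sub_modz 3%:Z c).
exact: dvdz_sub_add (dvdz_sub_modz 3%:Z a) (dvdz_sub_modz 3%:Z b).
Qed.

Lemma apollonian_reach_mod3 v j (rho : int) :
  has (fun x => (3 %| x - rho)%Z) (rcons (coords v) (- csum v)) ->
  exists U, apollonian U /\ (3 %| ((U *m v) j 0 - rho)%R)%Z.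
Proof.
rewrite has_rcons => /orP[s_rho | /has_coordsP[k k_rho]].
  exists (Sgen j); split; first exact: apo_gen.
  rewrite Sgen_mul_self (_ : _ - _ = (- csum v - rho) + 3 * (csum v - v j 0)); last by ring.
  by rewrite rpredD ?dvdz_mulr.
have [<-|kj] := eqVneq k j.
  by exists 1%:M; split; [exact: apo_id | rewrite mul1mx].
exists (Sgen j *m Sgen k); split; first exact: apo_mul (apo_gen j) (apo_gen k).
rewrite -mulmxA Sgen_mul_self csum_Sgen Sgen_mul_other 1?eq_sym //.
rewrite (_ : _ - _ = (v k 0 - rho) + 3 * (2 * csum v - 3 * v k 0 - v j 0)); last by ring.
by rewrite rpredD ?dvdz_mulr.
Qed.

Theorem theorem5p1 (v : 'cV[int]_4) :
  QD v = -4 ->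
  exists S : {set 'I_12},
    #|S| = 3%N /\
    forall r : 'I_12,
      r \in S <-> ~ (exists c : int, curvatures v c /\ (c %% 12)%Z = (nat_of_ord r)%:Z).
Proof.
move=> Qv; have even_v := QD_sum_even Qv; rewrite QDE in Qv.
exists [set r : 'I_12 | ~~ hit_mod4 (coords v) r]; split.
  by rewrite (card_set_ord _ (predC (hit_mod4 (coords v)))); exact: QD4_missing_mod4.
have r_range (r : 'I_12) : 0 <= r%:Z < 12 by rewrite ltz_nat ltn_ord.
move=> r; rewrite inE; split.
  move=> /negP far [c [[w [j [orb_w ->]]] /eqP]]; rewrite modz_eq_dvdz // => w_r.
  apply/far/has_coordsP; exists j.
  apply: dvdz_sub_trans (dvdz_trans (isT : (4 %| 12)%Z) w_r).
  by rewrite dvdz_sub_sym orbit_A_congr4.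
move=> no_c; apply/negP => /has_coordsP[j v_r]; apply: no_c.
have := QD4_cover_mod3 r Qv; rewrite -csumE => /(apollonian_reach_mod3 j)[U [apo_U Uv_r]].
have orb_Uv : orbit_A v (U *m v) by exists U.
exists ((U *m v) j 0); split; first by exists (U *m v), j.
apply/eqP; rewrite modz_eq_dvdz // (_ : 12 = 3 * 4) // Gauss_dvdz // Uv_r /=.
exact: dvdz_sub_trans (orbit_A_congr4 even_v orb_Uv j) v_r.
Qed.
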